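(* Let $G$ be a finite soluble group, $N$ a minimal normal subgroup of $G$, $x\in G\setminus\{1\}$ with $\mathrm d(x,N)>3$ in $\Gamma(G)$, and $y\in\langle x\rangle$ of prime order. Then $C_G(y)N$ is a Frobenius group with Frobenius complement $C_G(y)$, and $|C_G(y)|$ is odd.
   Context: For a group $G$, the normalising graph $\Gamma(G)$ has vertex set $G\setminus\{1\}$, and two distinct vertices $x,y$ are adjacent if and only if $\langle x\rangle$ normalises $\langle y\rangle$ or $\langle y\rangle$ normalises $\langle x\rangle$. $\mathrm d$ is graph distance (infinite if there is no path), and $\mathrm d(x,N)=\min\{\mathrm d(x,n):n\in N\setminus\{1\}\}$. *)

From mathcomp Require Import all_boot all_fingroup all_solvable.
Set Implicit Arguments. Unset Strict Implicit. Unset Printing Implicit Defensive.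
Local Open Scope group_scope.

Definition norm_adj (gT : finGroupType) (G : {set gT}) : rel gT :=
  fun x y => [&& x \in G^#, y \in G^#, x != y &
     (<[x]> \subset 'N(<[y]>)) || (<[y]> \subset 'N(<[x]>))].

Definition norm_dist_le (gT : finGroupType) (G : {set gT}) (k : nat) (x y : gT) :=
  x \in G^# /\ y \in G^# /\
  exists p : seq gT, size p <= k /\ path (norm_adj G) x p /\ last x p = y.

(* d(x,N) > k, where d(x,N) = min { d(x,n) : n in N \ {1} } (infinite distance
   allowed). *)
Definition norm_dist_set_gt (gT : finGroupType) (G N : {set gT}) (k : nat) (x : gT) :=
  forall n, n \in N^# -> ~ norm_dist_le G k x n.

From mathcomp Require Import all_boot all_fingroup all_solvable.
Set Implicit Arguments. Unset Strict Implicit. Unset Printing Implicit Defensive.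
Local Open Scope group_scope.

(* If d(x, N) > 3 then no nontrivial c in C_G(y) normalises <n> for n in N^#,
   since x - y - c - n would be a walk of length 3.  Hence C_G(y) acts
   fixed-point-freely on N, which makes C_G(y) N a Frobenius group; and an
   involution of C_G(y) would invert, hence normalise <n>, for every n in N. *)

Section NormalisingGraphDistance.

Variables (gT : finGroupType) (G : {group gT}).

Lemma norm_dist_le0 (u : gT) : u \in G^# -> norm_dist_le G 0 u u.
Proof. by move=> Gu; do 2!split=> //; exists [::]. Qed.

Lemma norm_dist_leS k (u v w : gT) :
    norm_dist_le G k u v -> w \in G^# ->
    (<[v]> \subset 'N(<[w]>)) || (<[w]> \subset 'N(<[v]>)) ->
  norm_dist_le G k.+1 u w.
Proof.
move=> [Gu [Gv [p [sz_p [path_p last_p]]]]] Gw nvw; do 2!split=> //.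
have [<- | neq_vw] := eqVneq v w; first by exists p; split=> //; apply: leqW.
exists (rcons p w); rewrite size_rcons rcons_path path_p last_p last_rcons.
by do 2!split=> //; rewrite /norm_adj Gv Gw neq_vw.
Qed.

Lemma cycle_norm_cent1 (v w : gT) : v \in 'C[w] -> <[v]> \subset 'N(<[w]>).
Proof. by move=> cwv; rewrite cycle_subG (subsetP (cent_sub _)) ?cent_cycle. Qed.

Lemma norm_dist_gt3_cent1 (N : {group gT}) (x y c n : gT) :
    N \subset G -> norm_dist_set_gt G N 3 x -> x \in G^# ->
    y \in <[x]> -> y != 1 -> c \in ('C_G[y])^# -> n \in N^# ->
  c \notin 'N(<[n]>).
Proof.
move=> sNG farNx Gx xy nty /setD1P[ntc /setIP[Gc cyc]] Nn.
have Gy : y \in G^#.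
  by rewrite !inE nty (subsetP _ _ xy) // cycle_subG; case/setD1P: Gx.
have G'c : c \in G^# by rewrite !inE ntc.
have G'n : n \in G^# by case/setD1P: Nn => ntn Nn'; rewrite !inE ntn (subsetP sNG).
apply/negP => ncn; apply: (farNx n Nn).
apply: (norm_dist_leS (v := c) _ G'n); last by rewrite cycle_subG ncn.
apply: (norm_dist_leS (v := y) _ G'c); last by rewrite (cycle_norm_cent1 cyc) orbT.
apply: (norm_dist_leS (norm_dist_le0 Gx) Gy).
by apply/orP; right; rewrite cycle_subG (subsetP (normG _)).
Qed.

End NormalisingGraphDistance.

(* m |-> m^-1 m^t is injective on N because C_N(t) = 1, hence onto N; and t
   inverts every m^-1 m^t since t^2 = 1. *)
Lemma conjg_regular_involution (gT : finGroupType) (N : {group gT}) t :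
  t \in 'N(N) -> #[t] = 2 -> 'C_N[t] = 1 -> {in N, forall n, n ^ t = n^-1}.
Proof.
move=> nNt ot2 regNt n Nn.
pose f m := m^-1 * m ^ t.
have injf : {in N &, injective f}.
  move=> a b Na Nb; rewrite /f => eq_f; apply/eqP; rewrite eq_mulgV1.
  suff : a * b^-1 \in 'C_N[t] by rewrite regNt inE.
  rewrite inE groupM ?groupV //= (sameP cent1P commgP); apply/conjg_fixP.
  rewrite conjMg conjVg.
  have -> : a ^ t = a * (b^-1 * b ^ t) by rewrite -eq_f mulKVg.
  by rewrite -mulgA mulgK.
have fN : f @: N = N.
  apply/eqP; rewrite eqEcard card_in_imset // leqnn andbT.
  by apply/subsetP=> _ /imsetP[m Nm ->]; rewrite groupM ?groupV ?memJ_norm.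
have /imsetP[m _ ->] : n \in f @: N by rewrite fN.
have t2_eq1 : t * t = 1 by rewrite -(expg_order t) ot2 expgS expg1.
by rewrite /f conjMg conjVg -conjgM t2_eq1 conjg1 [RHS]invMg invgK.
Qed.

Section NonNormalisingAction.

Variables (gT : finGroupType) (N H : {group gT}).
Hypothesis nonnorm : {in H^# & N^#, forall c n, c \notin 'N(<[n]>)}.

Lemma nonnorm_trivgI : N :&: H = 1.
Proof.
apply/trivgP/subsetP => c /setIP[Nc Hc]; rewrite inE; apply/negPn/negP => ntc.
have [H'c N'c] : c \in H^# /\ c \in N^# by rewrite !inE ntc.
by have /negP[] := nonnorm H'c N'c; rewrite (subsetP (normG _)) ?cycle_id.
Qed.

Lemma nonnorm_semiregular : semiregular N H.
Proof.
move=> c Hc; apply/trivgP/subsetP => n /setIP[Nn cnc]; rewrite inE.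
apply/negPn/negP => ntn; have N'n : n \in N^# by rewrite !inE ntn.
by have /negP[] := nonnorm Hc N'n; rewrite -cycle_subG cycle_norm_cent1 // cent1C.
Qed.

Hypothesis nNH : H \subset 'N(N).

Lemma nonnorm_odd : N :!=: 1 -> odd #|H|.
Proof.
move=> ntN; apply/negPn/negP; rewrite -dvdn2 => evenH.
have [t Ht ot2] := Cauchy (isT : prime 2) evenH.
have H't : t \in H^# by rewrite !inE Ht andbT -order_gt1 ot2.
have [n Nn ntn] := trivgPn _ ntN; have N'n : n \in N^# by rewrite !inE ntn.
have inv_n := conjg_regular_involution (subsetP nNH t Ht) ot2
  (nonnorm_semiregular H't) Nn.
have /negP[] := nonnorm H't N'n.
by apply/normP; rewrite -cycleJ inv_n cycleV.
Qed.

Lemma nonnorm_Frobenius :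
  N :!=: 1 -> H :!=: 1 -> [Frobenius H * N with complement H].
Proof.
move=> ntN ntH; have defNH : N ><| H = N <*> H.
  by rewrite sdprodE ?nonnorm_trivgI ?norm_joinEr.
have := FrobeniusWcompl (introT (Frobenius_semiregularP defNH ntN ntH)
  nonnorm_semiregular).
by rewrite /= norm_joinEr // (normC nNH).
Qed.

End NonNormalisingAction.

Theorem mainTheorem10 (gT : finGroupType) (G N : {group gT}) (x y : gT) :
  solvable G ->
  N <| G -> minnormal N G ->
  x \in G^# ->
  norm_dist_set_gt G N 3 x ->
  y \in <[x]> -> prime #[y] ->
  [Frobenius ('C_G[y] * N) with complement 'C_G[y]] /\ odd #|'C_G[y]|.
Proof.
move=> _ nsNG minN Gx farNx xy pr_y.
have [ntN _] := andP (mingroupp minN).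
have nty : y != 1 by apply: contraTneq pr_y => ->; rewrite order1.
have nonnorm : {in ('C_G[y])^# & N^#, forall c n, c \notin 'N(<[n]>)}.
  by move=> c n; apply: norm_dist_gt3_cent1 (normal_sub nsNG) farNx Gx xy nty.
have nNC : 'C_G[y] \subset 'N(N) := subset_trans (subsetIl _ _) (normal_norm nsNG).
have ntC : 'C_G[y] :!=: 1.
  apply/trivgPn; exists y => //.
  rewrite inE cent1id andbT (subsetP _ _ xy) // cycle_subG.
  by case/setD1P: Gx.
by split; [apply: nonnorm_Frobenius | apply: nonnorm_odd nonnorm nNC ntN].
Qed.
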